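(* Let $p\in(1,\infty)$, let $X_1,X_2$ be Banach spaces, $X=X_1\oplus_p X_2$, and $k\in\mathbb{N}$. For every $\varepsilon>0$ and every Lipschitz map $h=(f,g):([\mathbb{N}]^k,d_{\mathbb{H}})\to X$ (with $f:[\mathbb{N}]^k\to X_1$, $g:[\mathbb{N}]^k\to X_2$), there exists $\mathbb{M}\in[\mathbb{N}]^\omega$ such that for every $1\le j\le k$, $$\operatorname{Lip}_j(f_{|[\mathbb{M}]^k})^p+\operatorname{Lip}_j(g_{|[\mathbb{M}]^k})^p\le\operatorname{Lip}_j(h)^p+\varepsilon.$$
   Context: $X_1\oplus_p X_2$ is $X_1\times X_2$ with norm $\|(x_1,x_2)\|=(\|x_1\|^p+\|x_2\|^p)^{1/p}$. For $\mathbb{M}\subset\mathbb{N}$ infinite, $[\mathbb{M}]^k=\{(n_1,\dots,n_k)\in\mathbb{M}^k:n_1<\cdots<n_k\}$ with Hamming distance $d_{\mathbb{H}}(\overline{n},\overline{m})=|\{j:n_j\ne m_j\}|$; $[\mathbb{N}]^\omega$ is the set of infinite subsets of $\mathbb{N}$. $H_j(\mathbb{M})=\{(\overline{n},\overline{m})\in[\mathbb{M}]^k\times[\mathbb{M}]^k: n_i=m_i\ \forall i\ne j,\ n_j<m_j\}$. For $F$ defined on $[\mathbb{M}]^k$ with values in a normed space, $\operatorname{Lip}_j(F)=\sup_{(\overline{n},\overline{m})\in H_j(\mathbb{M})}\|F(\overline{n})-F(\overline{m})\|$; in particular $\operatorname{Lip}_j(h)$ is the supremum over $H_j(\mathbb{N})$.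 *)

From HB Require Import structures.
From mathcomp Require Import all_boot all_order all_algebra.
From mathcomp Require Import all_classical all_reals all_analysis.
Set Implicit Arguments. Unset Strict Implicit. Unset Printing Implicit Defensive.
Import Order.TTheory GRing.Theory Num.Theory.
Import numFieldNormedType.Exports.
Local Open Scope classical_set_scope.
Local Open Scope ring_scope.

(* [M]^k : strictly increasing k-tuples with entries in M *)
Definition incr_in (M : set nat) (k : nat) (n : k.-tuple nat) : Prop :=
  sorted ltn n /\ (forall i : 'I_k, M (tnth n i)).

Definition dHam (k : nat) (n m : k.-tuple nat) : nat :=
  #|[set i : 'I_k | tnth n i != tnth m i]|.

(* H_j(M) (j is 0-based: j : 'I_k stands for the paper's j+1) *)
Definition Hj (M : set nat) (k : nat) (j : 'I_k)
  : set (k.-tuple nat * k.-tuple nat) :=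
  [set nm | incr_in M nm.1 /\ incr_in M nm.2 /\
            (forall i : 'I_k, i != j -> tnth nm.1 i = tnth nm.2 i) /\
            (tnth nm.1 j < tnth nm.2 j)%N].

(* Lip_j of a map given through its distance function d(F n, F m) *)
Definition LipjD {R : realType} (M : set nat) (k : nat) (j : 'I_k)
  (d : k.-tuple nat -> k.-tuple nat -> R) : R :=
  sup [set d nm.1 nm.2 | nm in Hj M j].

Definition Lipj {R : realType} {V : normedModType R} (M : set nat) (k : nat)
  (j : 'I_k) (F : k.-tuple nat -> V) : R :=
  LipjD M j (fun n m => `|F n - F m|).

(* the norm of X1 (+)_p X2 : ||(x1,x2)|| = (||x1||^p + ||x2||^p)^(1/p) *)
Definition psum_norm {R : realType} (p a b : R) : R :=
  (a `^ p + b `^ p) `^ p^-1.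

Definition hdist {R : realType} {X1 X2 : normedModType R} (p : R) (k : nat)
  (f : k.-tuple nat -> X1) (g : k.-tuple nat -> X2) (n m : k.-tuple nat) : R :=
  psum_norm p `|f n - f m| `|g n - g m|.

(* Colour each increasing (k+1)-tuple s of naturals by the band of width
   d = eps/2 containing ||f n - f m||^p, where n and m are s with its (j+1)-th,
   resp. j-th, entry deleted; every pair of H_j(N) arises in this way.  Infinite
   Ramsey (finitely many colours, once for each j and each of f, g) yields an
   infinite M on which every colour is constant, so all values ||f n - f m||^p
   with (n, m) in H_j(M) lie in one band [a d, (a + 1) d), and likewise for g
   with [b d, (b + 1) d).  Any single pair of H_j(M) then gives
   (a + b) d <= ||h n - h m||^p <= Lip_j(h)^p, while
   Lip_j(f|M)^p + Lip_j(g|M)^p <= (a + 1) d + (b + 1) d. *)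

From HB Require Import structures.
From mathcomp Require Import all_boot all_order all_algebra.
From mathcomp Require Import all_classical all_reals all_analysis.
From mathcomp Require Import lra.
Import Order.TTheory GRing.Theory Num.Theory.
Import numFieldNormedType.Exports.
Local Open Scope classical_set_scope.

Definition unbounded (A : set nat) := forall n, exists2 m, (n <= m)%N & A m.

Lemma unboundedT : unbounded setT.
Proof. by move=> n; exists n. Qed.

Lemma unbounded_sub (A B : set nat) : A `<=` B -> unbounded A -> unbounded B.
Proof. by move=> AB hA n; have [m nm /AB Bm] := hA n; exists m. Qed.

Lemma unboundedIge {A : set nat} n :
  unbounded A -> unbounded (A `&` [set m | (n <= m)%N]).
Proof.
move=> hA l; have [m lm Am] := hA (maxn n l).
by exists m; [exact: leq_trans (leq_maxr _ _) lm | split=> //; exact: leq_trans (leq_maxl _ _) lm].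
Qed.

Lemma unbounded_infinite (A : set nat) : unbounded A -> infinite_set A.
Proof.
move=> hA /finite_seqP[s eA]; have [m lt_max_m] := hA (\max_(x <- s) x).+1.
rewrite eA /= => ms; have := @leq_bigmax_seq _ s xpredT id m ms isT.
by rewrite leqNgt lt_max_m.
Qed.

Lemma unbounded_pigeonhole C (c : nat -> nat) {A : set nat} :
  unbounded A -> (forall x, A x -> (c x < C)%N) ->
  exists2 col, (col < C)%N & unbounded (A `&` [set x | c x = col]).
Proof.
elim: C A => [|C IH] A hA hc; first by have [m _ /hc] := hA 0%N.
have [hC|hC] := pselect (unbounded (A `&` [set x | c x = C])); first by exists C.
have [n hn] : exists n, ~ exists2 m, (n <= m)%N & (A `&` [set x | c x = C]) m.
  exact/existsNP.
have hc' x : (A `&` [set m | (n <= m)%N]) x -> (c x < C)%N.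
  move=> [Ax nx]; have := hc x Ax; rewrite ltnS leq_eqVlt => /predU1P[cx|//].
  by case: hn; exists x.
have [col colC hcol] := IH _ (unboundedIge n hA) hc'.
exists col; first exact: ltnW.
by apply: unbounded_sub hcol => x [[]].
Qed.

Definition homogeneous (r : nat) (c : seq nat -> nat) (B : set nat) (col : nat) :=
  forall s, size s = r -> sorted ltn s -> [set` s] `<=` B -> c s = col.

Lemma homogeneous_sub {r c} {B B' : set nat} {col} :
  B' `<=` B -> homogeneous r c B col -> homogeneous r c B' col.
Proof. by move=> B'B hB s sz srt sB'; apply: hB => // x /sB'/B'B. Qed.

Section RamseyStep.
Context {r C : nat}.
Hypothesis ramsey_r : forall (c : seq nat -> nat) (A : set nat),
  unbounded A -> (forall s, (c s < C)%N) ->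
  exists B col, [/\ (col < C)%N, B `<=` A, unbounded B & homogeneous r c B col].

(* a i is taken from X_i, and X_(i+1) is an unbounded subset of X_i above a i
   on which c (a i :: _) is constant. *)
Lemma ramsey_diagonal {c : seq nat -> nat} {A : set nat} :
  unbounded A -> (forall s, (c s < C)%N) ->
  exists (a cl : nat -> nat), [/\ forall i, A (a i), {homo a : i j / (i < j)%N},
    forall i, (cl i < C)%N &
    forall i, homogeneous r (fun s => c (a i :: s)) (a @` [set j | (i < j)%N]) (cl i)].
Proof.
move=> hA hc.
have step (X : set nat) : exists t : nat * nat * set nat, unbounded X ->
    [/\ X t.1.1, t.2 `<=` X `&` [set x | (t.1.1 < x)%N], unbounded t.2,
        (t.1.2 < C)%N & homogeneous r (fun s => c (t.1.1 :: s)) t.2 t.1.2].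
  have [hX|] := pselect (unbounded X); last by exists (0, 0, set0)%N.
  have [x _ Xx] := hX 0%N.
  have [B [col [colC BX uB hB]]] :=
    ramsey_r (fun s => c (x :: s)) _ (unboundedIge x.+1 hX) (fun s => hc _).
  by exists (x, col, B).
have [F hF] := choice step.
pose X i := iter i (fun Y => (F Y).2) A.
have uX i : unbounded (X i) by elim: i => [//|i IHi]; have [] := hF _ IHi.
have XS i : X i.+1 `<=` X i `&` [set x | ((F (X i)).1.1 < x)%N].
  by have [] := hF _ (uX i).
have Xnested i j : (i <= j)%N -> X j `<=` X i.
  move=> /subnK <-; elim: (j - i)%N => [//|l IHl] x.
  by rewrite addSn => /XS[/IHl].
pose a i := (F (X i)).1.1.
have Xa i : X i (a i) by have [] := hF _ (uX i).
have Xa_gt i j : (i < j)%N -> X i.+1 (a j) by move=> ij; apply: Xnested ij _ (Xa j).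
exists a, (fun i => (F (X i)).1.2); split.
- by move=> i; apply: Xnested (leq0n i) _ (Xa i).
- by move=> i j /Xa_gt /XS[].
- by move=> i; have [] := hF _ (uX i).
- move=> i; have [_ _ _ _] := hF _ (uX i); apply: homogeneous_sub.
  by move=> _ [j ij <-]; exact: Xa_gt.
Qed.

End RamseyStep.

Lemma ramsey r {C} (c : seq nat -> nat) {A : set nat} :
  unbounded A -> (forall s, (c s < C)%N) ->
  exists B col, [/\ (col < C)%N, B `<=` A, unbounded B & homogeneous r c B col].
Proof.
elim: r c A => [|r IH] c A hA hc.
  by exists A, (c [::]); split=> // -[].
have [a [cl [Aa a_incr clC hcl]]] := ramsey_diagonal IH hA hc.
have [col colC hcol] := unbounded_pigeonhole _ cl unboundedT (fun i _ => clC i).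
have le_a i : (i <= a i)%N.
  by elim: i => [//|i IHi]; exact: leq_ltn_trans IHi (a_incr _ _ (ltnSn i)).
exists (a @` [set i | cl i = col]), col; split=> //.
- by move=> _ [i _ <-].
- move=> n; have [i ni [_ cli]] := hcol n.
  by exists (a i); [exact: leq_trans ni (le_a i) | exists i].
- move=> [|x s] //= [sz] srt sB.
  have [i cli xi] := sB x (mem_head _ _); rewrite -xi -cli; apply: hcl => //.
    exact: path_sorted srt.
  move=> y ys; have [j _ yj] := sB y (@mem_behead _ (x :: s) y ys).
  exists j => //=; rewrite -(leqW_mono (leq_mono a_incr)) xi yj.
  by have /allP := order_path_min ltn_trans srt; apply.
Qed.

Lemma ramsey_family r N {C} (c : nat -> seq nat -> nat) {A : set nat} :
  unbounded A -> (forall i s, (c i s < C)%N) ->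
  exists B, [/\ B `<=` A, unbounded B &
    forall i, (i < N)%N -> exists col, homogeneous r (c i) B col].
Proof.
move=> hA hc; elim: N => [|N [B [BA uB hB]]]; first by exists A; split.
have [B' [col [_ B'B uB' hB']]] := ramsey r (c N) uB (hc N).
exists B'; split=> [x /B'B /BA //|//|i].
rewrite ltnS leq_eqVlt => /predU1P[->|iN]; first by exists col.
by have [c' hc'] := hB i iN; exists c'; exact: homogeneous_sub B'B hc'.
Qed.

Definition del_nth k (i : nat) (s : seq nat) : k.-tuple nat :=
  [tuple nth 0%N s (bump i l) | l < k].

Lemma Hj_merge {M : set nat} {k} {j : 'I_k} {n m : k.-tuple nat} : Hj M j (n, m) ->
  exists s, [/\ size s = k.+1, sorted ltn s, [set` s] `<=` M,
                del_nth k j.+1 s = n & del_nth k j s = m].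
Proof.
move=> [[/= srt_n Mn] [[/= srt_m Mm] [/= nm_eq nm_lt]]].
have M_nth (t : k.-tuple nat) l : (forall i, M (tnth t i)) -> (l < k)%N -> M (nth 0%N t l).
  by move=> Mt lk; rewrite -(tnth_nth 0%N t (Ordinal lk)).
have nth_eq (l : nat) : l != j -> nth 0%N n l = nth 0%N m l.
  have [lk lj|kl _] := ltnP l k; first by rewrite -!(tnth_nth 0%N _ (Ordinal lk)) nm_eq.
  by rewrite !nth_default ?size_tuple.
have nth_lt (t : k.-tuple nat) l : sorted ltn t -> (l.+1 < k)%N ->
    (nth 0%N t l < nth 0%N t l.+1)%N.
  by move=> /(sortedP 0%N) srt lk; apply: srt; rewrite size_tuple.
have bump_lt i (l : 'I_k) : (bump i l < k.+1)%N.
  by rewrite /bump ltnS; case: (i <= l)%N; rewrite ?add1n ?add0n // ltnW.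
(* s = (n_0, ..., n_j, m_j, ..., m_(k-1)) *)
pose s := mkseq (fun l => if (l <= j)%N then nth 0%N n l else nth 0%N m l.-1) k.+1.
have jk := ltn_ord j.
exists s; split.
- exact: size_mkseq.
- apply/(sortedP 0%N) => l; rewrite size_mkseq ltnS => lk.
  rewrite !nth_mkseq ?ltnS ?(ltnW lk) //.
  case: (ltngtP l j) => [lj|jl|->]; first exact: nth_lt srt_n (leq_ltn_trans lj jk).
    by case: l jl lk => // l jl lk; exact: nth_lt srt_m lk.
  by rewrite /= -(tnth_nth 0%N n) -(tnth_nth 0%N m).
- move=> x /mapP[l]; rewrite mem_iota => /andP[_ lk] ->.
  case: ifP => [lj|/negbT]; first exact: M_nth Mn (leq_ltn_trans lj jk).
  by case: l lk => // l lk _; exact: M_nth Mm lk.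
- apply: eq_from_tnth => l; rewrite tnth_mktuple (tnth_nth 0%N) nth_mkseq // /bump.
  case: (leqP j.+1 l) => [jl|lj] /=; rewrite ?add0n ?add1n; last by rewrite -ltnS lj.
  by rewrite ltnNge (ltnW jl) /= nth_eq // gtn_eqF.
- apply: eq_from_tnth => l; rewrite tnth_mktuple (tnth_nth 0%N) nth_mkseq // /bump.
  case: (leqP j l) => [jl|lj] /=; rewrite ?add0n ?add1n; first by rewrite ltnNge jl.
  by rewrite (ltnW lj) nth_eq // ltn_eqF.
Qed.

Local Open Scope ring_scope.

Section PowR.
Context {R : realType}.
Implicit Types (p b d x y K : R).

Lemma powRVK {p x} : p != 0 -> 0 <= x -> (x `^ p^-1) `^ p = x.
Proof. by move=> p0 x0; rewrite -powRrM mulVf // powRr1. Qed.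

Lemma ler_powR2r {p} : 0 < p -> {in Num.nneg &, {mono @powR R ^~ p : x y / x <= y}}.
Proof. by move=> p0; apply: le_mono_in; exact: gt0_ltr_powR. Qed.

Lemma powR_sup_le {T} (P : set T) (c : T -> R) p b :
  0 < p -> 0 <= b -> (forall t, 0 <= c t) -> (forall t, P t -> c t `^ p <= b) ->
  sup [set c t | t in P] `^ p <= b.
Proof.
move=> p0 b0 c0 cb.
have [[t0 Pt0]|/nonemptyPn->] := pselect (P !=set0); last first.
  by rewrite image_set0 sup0 powR0 ?gt_eqF.
have ub : ubound [set c t | t in P] (b `^ p^-1).
  by move=> _ [t Pt <-]; rewrite -(ler_powR2r p0) ?nnegrE ?powR_ge0 // powRVK ?gt_eqF ?cb.
have sup_ge0 : 0 <= sup [set c t | t in P].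
  by apply: le_trans (c0 t0) (ub_le_sup _ _); [exists (b `^ p^-1) | exists t0].
rewrite -[leRHS](powRVK (lt0r_neq0 p0) b0) ler_powR2r ?nnegrE ?powR_ge0 //.
by apply: ge_sup ub; exists (c t0), t0.
Qed.

Lemma psum_normK p x y : p != 0 -> psum_norm p x y `^ p = x `^ p + y `^ p.
Proof. by move=> p0; rewrite powRVK // addr_ge0 ?powR_ge0. Qed.

(* The cap keeps the colouring finite on sequences that do not come from H_j. *)
Definition band d K x : nat := minn (Num.truncn (x / d)) (Num.truncn (K / d)).

Lemma band_lt d K x : (band d K x < (Num.truncn (K / d)).+1)%N.
Proof. by rewrite ltnS geq_minr. Qed.

Lemma band_itv d K x : 0 < d -> 0 <= x <= K ->
  (band d K x)%:R * d <= x < (band d K x).+1%:R * d.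
Proof.
move=> d0 /andP[x0 xK].
rewrite /band; have /minn_idPl-> : (Num.truncn (x / d) <= Num.truncn (K / d))%N.
  by apply: le_truncn; rewrite ler_pM2r ?invr_gt0.
rewrite -ler_pdivlMr // -ltr_pdivrMr //; exact: truncn_itv (divr_ge0 x0 (ltW d0)).
Qed.

Lemma sup_powR_bands {T} (P : set T) (a b : T -> R) p d H (ca cb : nat) :
  0 < p -> 0 <= d -> 0 <= H -> (forall t, 0 <= a t) -> (forall t, 0 <= b t) ->
  (forall t, P t -> a t `^ p + b t `^ p <= H) ->
  (forall t, P t -> ca%:R * d <= a t `^ p < ca.+1%:R * d) ->
  (forall t, P t -> cb%:R * d <= b t `^ p < cb.+1%:R * d) ->
  sup [set a t | t in P] `^ p + sup [set b t | t in P] `^ p <= H + d *+ 2.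
Proof.
move=> p0 d0 H0 a0 b0 abH ha hb.
have [[t0 Pt0]|/nonemptyPn->] := pselect (P !=set0); last first.
  by rewrite !image_set0 sup0 powR0 ?gt_eqF // addr0 addr_ge0 ?mulrn_wge0.
have supa : sup [set a t | t in P] `^ p <= ca.+1%:R * d.
  by apply: powR_sup_le => // [|t /ha/andP[_ /ltW]//]; rewrite mulr_ge0.
have supb : sup [set b t | t in P] `^ p <= cb.+1%:R * d.
  by apply: powR_sup_le => // [|t /hb/andP[_ /ltW]//]; rewrite mulr_ge0.
apply: le_trans (lerD supa supb) _.
have /andP[ha0 _] := ha t0 Pt0; have /andP[hb0 _] := hb t0 Pt0.
have := le_trans (lerD ha0 hb0) (abH t0 Pt0).
rewrite -addn1 -(addn1 cb) !natrD !mulrDl !mul1r mulr2n; lra.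
Qed.

End PowR.

Definition step_colour {R : realType} {k} (i : nat) (D : k.-tuple nat -> k.-tuple nat -> R)
    (d K : R) (s : seq nat) : nat :=
  band d K (D (del_nth k i.+1 s) (del_nth k i s)).

Lemma homogeneous_step_colour {R : realType} {M : set nat} {k} {j : 'I_k}
    {D : k.-tuple nat -> k.-tuple nat -> R} {d K : R} {col} :
  homogeneous k.+1 (step_colour j D d K) M col ->
  0 < d -> (forall t, Hj M j t -> 0 <= D t.1 t.2 <= K) ->
  forall t, Hj M j t -> col%:R * d <= D t.1 t.2 < col.+1%:R * d.
Proof.
move=> hom d0 DK [n m] Mnm; have [s [sz srt sM en em]] := Hj_merge Mnm.
by rewrite -(hom s sz srt sM) /step_colour en em; apply: band_itv => //; exact: DK Mnm.
Qed.

Lemma subset_Hj {M M' : set nat} {k} {j : 'I_k} : M `<=` M' -> Hj M j `<=` Hj M' j.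
Proof.
by move=> MM' [n m] [[sn Mn] [[sm Mm] nm]]; split; [|split] => //; split=> // i; apply: MM'.
Qed.

Lemma LipjD_ub {R : realType} (M : set nat) k (j : 'I_k)
    (D : k.-tuple nat -> k.-tuple nat -> R) (b : R) t :
  (forall t, Hj M j t -> D t.1 t.2 <= b) -> Hj M j t -> D t.1 t.2 <= LipjD M j D.
Proof. by move=> Db Mt; apply: ub_le_sup; [exists b => _ [u /Db uB <-] | exists t]. Qed.

Lemma dHam_le k (n m : k.-tuple nat) : (dHam n m <= k)%N.
Proof. by rewrite /dHam (leq_trans (max_card _)) ?card_ord. Qed.

Definition dist_powR {R : realType} {V : normedModType R} (p : R) {k}
    (F : k.-tuple nat -> V) (n m : k.-tuple nat) : R :=
  `|F n - F m| `^ p.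

Section LipjBands.
Context {R : realType} {X1 X2 : normedModType R} {k : nat}.
Variables (p : R) (f : k.-tuple nat -> X1) (g : k.-tuple nat -> X2).
Hypothesis p_gt0 : 0 < p.

Lemma Lipj_powR_bands (B : set nat) (j : 'I_k) (C d : R) (cf cg : nat) : 0 < d ->
  (forall t, Hj setT j t -> hdist p f g t.1 t.2 <= C) ->
  homogeneous k.+1 (step_colour j (dist_powR p f) d (C `^ p)) B cf ->
  homogeneous k.+1 (step_colour j (dist_powR p g) d (C `^ p)) B cg ->
  Lipj B j f `^ p + Lipj B j g `^ p <= LipjD setT j (hdist p f g) `^ p + d *+ 2.
Proof.
move=> d0 hdist_le hf hg.
have hdist_Lip t : Hj B j t -> hdist p f g t.1 t.2 <= LipjD setT j (hdist p f g).
  by move=> Bt; apply: LipjD_ub hdist_le _; exact: subset_Hj (subsetT B) _ Bt.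
have fg_hdist t : dist_powR p f t.1 t.2 + dist_powR p g t.1 t.2 = hdist p f g t.1 t.2 `^ p.
  by rewrite psum_normK ?lt0r_neq0.
have fg_le t c : hdist p f g t.1 t.2 <= c ->
    dist_powR p f t.1 t.2 + dist_powR p g t.1 t.2 <= c `^ p.
  move=> hc; have c_ge0 := le_trans (powR_ge0 _ _) hc.
  by rewrite fg_hdist; apply: ge0_ler_powR hc; rewrite ?nnegrE ?powR_ge0 ?(ltW p_gt0).
have fg_Lip t : Hj B j t ->
    dist_powR p f t.1 t.2 + dist_powR p g t.1 t.2 <= LipjD setT j (hdist p f g) `^ p.
  by move=> Bt; apply/fg_le/hdist_Lip.
have fg_C t : Hj B j t -> dist_powR p f t.1 t.2 + dist_powR p g t.1 t.2 <= C `^ p.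
  by move=> Bt; apply/fg_le/hdist_le; exact: subset_Hj (subsetT B) _ Bt.
have bands_f t : Hj B j t -> cf%:R * d <= dist_powR p f t.1 t.2 < cf.+1%:R * d.
  apply: homogeneous_step_colour hf d0 _ t => u Bu.
  by rewrite powR_ge0 (le_trans _ (fg_C u Bu)) // lerDl powR_ge0.
have bands_g t : Hj B j t -> cg%:R * d <= dist_powR p g t.1 t.2 < cg.+1%:R * d.
  apply: homogeneous_step_colour hg d0 _ t => u Bu.
  by rewrite powR_ge0 (le_trans _ (fg_C u Bu)) // lerDr powR_ge0.
by apply: sup_powR_bands fg_Lip bands_f bands_g; rewrite ?powR_ge0 ?(ltW d0).
Qed.

End LipjBands.

Theorem mainTheorem2 (R : realType) (p : R) (X1 X2 : completeNormedModType R)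
  (k : nat) (f : k.-tuple nat -> X1) (g : k.-tuple nat -> X2) :
  1 < p ->
  (* h = (f, g) is Lipschitz from ([N]^k, d_H) to X1 (+)_p X2 *)
  (exists L : R, forall n m : k.-tuple nat, incr_in setT n -> incr_in setT m ->
     hdist p f g n m <= L * (dHam n m)%:R) ->
  forall eps : R, 0 < eps ->
  exists M : set nat, infinite_set M /\
    forall j : 'I_k,
      Lipj M j f `^ p + Lipj M j g `^ p
        <= LipjD setT j (hdist p f g) `^ p + eps.
Proof.
move=> p1 [L hL] eps eps0.
have p0 : 0 < p := lt_trans ltr01 p1.
pose d := eps / 2; have d0 : 0 < d by rewrite divr_gt0.
pose K := (`|L| * k%:R) `^ p.
have [Bf [_ uBf hBf]] := ramsey_family k.+1 k
  (fun i => step_colour i (dist_powR p f) d K) unboundedT (fun i s => band_lt _ _ _).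
have [B [BBf uB hB]] := ramsey_family k.+1 k
  (fun i => step_colour i (dist_powR p g) d K) uBf (fun i s => band_lt _ _ _).
exists B; split=> [|j]; first exact: unbounded_infinite.
have [cf hf] := hBf j (ltn_ord j); have [cg hg] := hB j (ltn_ord j).
rewrite (_ : eps = d *+ 2); last by rewrite mulr2n /d -splitr.
apply: Lipj_powR_bands d0 _ (homogeneous_sub BBf hf) hg => // -[n m] [/= n_incr [m_incr _]].
apply: le_trans (hL n m n_incr m_incr) _.
apply: le_trans (ler_wpM2r (ler0n _ _) (ler_norm L)) _.
by rewrite ler_wpM2l ?ler_nat ?dHam_le.
Qed.
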